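(* Let $\mathcal{N}=(D,P)$ be a broadcast network with client $P=(Q,I,\delta)$, let $F\subseteq Q$, and let $\mathcal{N}_F$ be the instrumented network. For configurations $c_0,c\in Q^k$: there is a computation $c_0\to^* c\Rightarrow_F c$ in $\mathcal{N}$ if and only if there is a computation $\tilde c_0\to^* c\to^+ c$ in $\mathcal{N}_F$, where $\tilde c_0\in\tilde Q^k$ is defined by $\tilde c_0[i]=\widetilde{c_0[i]}$.
   Context: A broadcast network is a pair $\mathcal{N}=(D,P)$ where $D$ is a finite set of messages and $P=(Q,I,\delta)$ is a finite automaton with $\delta\subseteq Q\times\mathrm{Ops}(D)\times Q$, $\mathrm{Ops}(D)=\{!a,\ ?a: a\in D\}$. A configuration is $c\in Q^k$ for some $k$, with entries $c[i]$. For $c,c'\in Q^k$ and $a\in D$, $c\xrightarrow{a}c'$ holds if there is $i$ with $(c[i],!a,c'[i])\in\delta$, a set $R\subseteq[1..k]\setminus\{i\}$ with $(c[j],?a,c'[j])\in\delta$ for $j\in R$, and $c[j]=c'[j]$ for $j\notin R\cup\{i\}$; then $\mathrm{type}(c\xrightarrow{a}c')=R\cup\{i\}$. $\to^*$ (resp. $\to^+$) means zero or more (resp. at least one) transitions. A finite computation $c_1\to\cdots\to c_n$ with $n\ge2$ is good for $F$, written $c_1\Rightarrow_F c_n$, if every client $i$ with $i\in\mathrm{type}(c_j\to c_{j+1})$ for some $j$ satisfies $c_k[i]\in F$ for some $k\in[1..n]$. The instrumented network is $\mathcal{N}_F=(D\cup\{n\},P_F)$ with a fresh message $n\notin D$ and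 client $P_F=(\bar Q,\tilde I,\bar\delta)$, where $\bar Q=Q\cup\hat Q\cup\tilde Q$ with $\hat Q=\{\hat q: q\in Q\}$ and $\tilde Q=\{\tilde q: q\in Q\}$ two disjoint copies of $Q$, $\tilde I=\{\tilde q: q\in I\}$, and $\bar\delta$ contains exactly: for every $(q,o,q')\in\delta$ the transitions $(q,o,\hat q')$, $(\hat q,o,\hat q')$, $(\tilde q,o,\tilde q')$; for every $q\in F$ the transition $(\hat q,!n,\tilde q)$; for every $q\in Q$ the transition $(\tilde q,!n,q)$. *)

From Stdlib Require List.
From mathcomp Require Import all_boot.
Set Implicit Arguments. Unset Strict Implicit. Unset Printing Implicit Defensive.

Inductive Op (M : Type) := Send of M | Recv of M.
Arguments Send {M}. Arguments Recv {M}.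

Section Network.
Variables (S M : Type) (delta : S -> Op M -> S -> Prop) (k : nat).

Definition config := {ffun 'I_k -> S}.

(* c --a--> c' with type(c -> c') = T  (T = R ∪ {i}) *)
Definition step (c : config) (a : M) (T : {set 'I_k}) (c' : config) : Prop :=
  exists i, [/\ i \in T, delta (c i) (Send a) (c' i) &
    forall j, j != i ->
      (j \in T -> delta (c j) (Recv a) (c' j)) /\ (j \notin T -> c' j = c j)].

Fixpoint run (c0 : config) (s : seq (M * {set 'I_k} * config)) : Prop :=
  match s with
  | [::] => True
  | (a, T, c1) :: s' => step c0 a T c1 /\ run c1 s'
  end.

Definition endcfg (c0 : config) (s : seq (M * {set 'I_k} * config)) : config :=
  last c0 [seq x.2 | x <- s].

Definition reach (c0 c : config) : Prop :=
  exists s, run c0 s /\ endcfg c0 s = c.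

Definition reach_plus (c0 c : config) : Prop :=
  exists s, s <> [::] /\ run c0 s /\ endcfg c0 s = c.

Definition good_reach (F : S -> Prop) (c0 c : config) : Prop :=
  exists s, [/\ s <> [::], run c0 s, endcfg c0 s = c &
    forall x, List.In x s -> forall i, i \in x.1.2 ->
      F (c0 i) \/ exists y, List.In y s /\ F (y.2 i)].

End Network.

Inductive QF (Q : Type) := Plain of Q | Hat of Q | Tilde of Q.
Arguments Plain {Q}. Arguments Hat {Q}. Arguments Tilde {Q}.

(* messages D ∪ {n}, with n encoded as None *)
Definition liftop (D : Type) (o : Op D) : Op (option D) :=
  match o with Send a => Send (Some a) | Recv a => Recv (Some a) end.

Inductive deltaF (Q D : Type) (delta : Q -> Op D -> Q -> Prop) (F : {pred Q})
  : QF Q -> Op (option D) -> QF Q -> Prop :=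
| dF_plain q o q' : delta q o q' -> deltaF delta F (Plain q) (liftop o) (Hat q')
| dF_hat q o q' : delta q o q' -> deltaF delta F (Hat q) (liftop o) (Hat q')
| dF_tilde q o q' : delta q o q' -> deltaF delta F (Tilde q) (liftop o) (Tilde q')
| dF_hat_n q : q \in F -> deltaF delta F (Hat q) (Send None) (Tilde q)
| dF_tilde_n q : deltaF delta F (Tilde q) (Send None) (Plain q).

Definition cfg_plain (Q : Type) k (c : {ffun 'I_k -> Q}) : {ffun 'I_k -> QF Q} :=
  [ffun i => Plain (c i)].
Definition cfg_tilde (Q : Type) k (c : {ffun 'I_k -> Q}) : {ffun 'I_k -> QF Q} :=
  [ffun i => Tilde (c i)].

From mathcomp Require Import all_boot.
Set Implicit Arguments. Unset Strict Implicit. Unset Printing Implicit Defensive.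

(* Projecting instrumented states to [Q] and forgetting the [n]-transitions
   turns runs of N_F into runs of N.  From a plain configuration, a client
   touched by a D-transition becomes hatted, and it can only become plain again
   through [Hat q -!n-> Tilde q], which requires [q] in [F], followed by
   [Tilde q -!n-> Plain q]; so a run that returns to a plain configuration
   projects to a good one.  Conversely, the prefix [c0 ->* c] is replayed in
   tilde states, and a good run [c => c] is replayed with hats: a hatted
   client turns to tilde as soon as its state is in [F], and at the end every
   tilde is released. *)

Section Runs.
Variables (S M : Type) (d : S -> Op M -> S -> Prop) (k : nat).
Implicit Types (x y z : config S k) (s : seq (M * {set 'I_k} * config S k)).

Lemma step_frame x a T y j : step d x a T y -> j \notin T -> y j = x j.
Proof.
move=> [i [iT _ frame]] jT; have ji : j != i by apply: contraNneq jT => ->.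
exact: (frame j ji).2.
Qed.

Lemma run_cat x s1 s2 :
  run d x (s1 ++ s2) <-> run d x s1 /\ run d (endcfg x s1) s2.
Proof.
elim: s1 x => [|[[a T] y] s1 IH] x /=; first by split=> // [[]].
by rewrite IH; tauto.
Qed.

Lemma endcfg_cat x s1 s2 : endcfg x (s1 ++ s2) = endcfg (endcfg x s1) s2.
Proof. by rewrite /endcfg map_cat last_cat. Qed.

Lemma reach_refl x : reach d x x.
Proof. by exists [::]. Qed.

Lemma reach_trans x y z : reach d x y -> reach d y z -> reach d x z.
Proof.
move=> [s1 [r1 <-]] [s2 [r2 <-]]; exists (s1 ++ s2).
by rewrite run_cat endcfg_cat.
Qed.

Lemma reach_plus_reach x y : reach_plus d x y -> reach d x y.
Proof. by move=> [s [_ rs]]; exists s. Qed.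

Lemma reach_plus_trans x y z : reach_plus d x y -> reach d y z -> reach_plus d x z.
Proof.
move=> [s1 [ne1 [r1 <-]]] [s2 [r2 <-]]; exists (s1 ++ s2).
split; first by case: s1 ne1 {r1 r2}.
by rewrite run_cat endcfg_cat.
Qed.

Lemma reach_step_plus x y a T z : reach d x y -> step d y a T z -> reach_plus d x z.
Proof.
move=> [s [r <-]] st; exists (rcons s (a, T, z)); split; first by case: s {r st}.
by rewrite -cats1 run_cat endcfg_cat.
Qed.

Definition update x i (v : S) : config S k := [ffun j => if j == i then v else x j].

Lemma step_solo x m i v : d (x i) (Send m) v -> step d x m [set i] (update x i v).
Proof.
move=> dxv; exists i; rewrite set11 ffunE eqxx; split=> // j ji.
by rewrite in_set1 (negbTE ji) ffunE (negbTE ji).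
Qed.

Lemma reach_solo_sends m x (g : 'I_k -> S) :
  (forall i, g i = x i \/ d (x i) (Send m) (g i)) -> reach d x (finfun g).
Proof.
move=> hg; suff /(_ (enum 'I_k)) : forall l : seq 'I_k,
    reach d x [ffun j => if j \in l then g j else x j].
  by congr reach; apply/ffunP => j; rewrite !ffunE mem_enum.
elim=> [|i l IH].
  suff -> : [ffun j => if j \in [::] then g j else x j] = x by apply: reach_refl.
  by apply/ffunP => j; rewrite ffunE.
set xl := [ffun j => _ ] in IH.
have [il|il] := boolP (i \in l).
  suff -> : [ffun j => if j \in i :: l then g j else x j] = xl by [].
  by apply/ffunP => j; rewrite !ffunE inE; case: eqP => [->|]; rewrite ?il.
have -> : [ffun j => if j \in i :: l then g j else x j] = update xl i (g i).
  by apply/ffunP => j; rewrite !ffunE inE; case: eqP => [->|].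
apply: reach_trans IH _.
have xli : xl i = x i by rewrite ffunE (negbTE il).
case: (hg i) => [gi|dgi].
  suff -> : update xl i (g i) = xl by apply: reach_refl.
  by apply/ffunP => j; rewrite ffunE; case: eqP => [->|//]; rewrite gi xli.
exists [:: (m, [set i], update xl i (g i))]; split=> //=; split=> //.
by apply: step_solo; rewrite xli.
Qed.

Section Visits.
Variable F : {pred S}.

Definition touched s (i : 'I_k) := exists e, List.In e s /\ i \in e.1.2.
Definition visits s (i : 'I_k) := exists e, List.In e s /\ e.2 i \in F.

Lemma touched_nonnil s i : touched s i -> s <> [::].
Proof. by case: s => [[? []]|]. Qed.

Lemma visits_endcfg x s i : s <> [::] -> endcfg x s i \in F -> visits s i.
Proof.
elim: s x => [//|e s IH] x _; case: s IH => [|e' s] IH /= eF.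
  by exists e; split=> //; left.
by case: (IH e.2 _ eF) => // e1 [e1s e1F]; exists e1; split=> //; right.
Qed.

End Visits.
End Runs.

Section Instrumented.
Variables (Q D : Type) (delta : Q -> Op D -> Q -> Prop) (F : {pred Q}) (k : nat).
Local Notation dF := (deltaF delta F).
Local Notation cfg := {ffun 'I_k -> Q}.
Local Notation cfgF := {ffun 'I_k -> QF Q}.
Implicit Types (w : QF Q) (c y : cfg) (z : cfgF) (s : seq (D * {set 'I_k} * cfg))
  (e : D * {set 'I_k} * cfg) (t : seq (option D * {set 'I_k} * cfgF)).

Definition proj w : Q := match w with Plain q | Hat q | Tilde q => q end.
Definition projc z : cfg := [ffun i => proj (z i)].
Definition isPlain w := if w is Plain _ then true else false.
Definition moved w q : QF Q := if w is Tilde _ then Tilde q else Hat q.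
Definition settle w : QF Q := if w is Hat q then if q \in F then Tilde q else w else w.
Definition release w : QF Q := if w is Tilde q then Plain q else w.

Lemma projc_plain c : projc (cfg_plain c) = c.
Proof. by apply/ffunP => i; rewrite !ffunE. Qed.

Lemma projc_tilde c : projc (cfg_tilde c) = c.
Proof. by apply/ffunP => i; rewrite !ffunE. Qed.

Lemma liftop_inj : injective (@liftop D).
Proof. by case=> [a|a] [b|b] //= [->]. Qed.

Lemma deltaF_moved w o q : delta (proj w) o q -> dF w (liftop o) (moved w q).
Proof. by case: w => q0 /=; constructor. Qed.

Lemma deltaF_liftopE w o w' :
  dF w (liftop o) w' -> delta (proj w) o (proj w') /\ w' = moved w (proj w').
Proof.
move E: (liftop o) => o' dw; case: dw E => [q o1 q' h|q o1 q' h|q o1 q' h|q _|q] /=;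
  by [move/liftop_inj -> | case: o].
Qed.

Lemma deltaF_nsendE w w' : dF w (Send None) w' ->
  (exists2 q, q \in F & w = Hat q /\ w' = Tilde q) \/ exists q, w = Tilde q /\ w' = Plain q.
Proof.
move E: (Send None) => o' dw; case: dw E => [q o q' _|q o q' _|q o q' _|q qF _|q _];
  by [case: o | left; exists q | right; exists q].
Qed.

Lemma deltaF_nrecv w w' : ~ dF w (Recv None) w'.
Proof. by move E: (Recv None) => o' dw; case: dw E => // q o q' _; case: o. Qed.

Lemma step_liftop_inv z a T z1 : step dF z (Some a) T z1 ->
  step delta (projc z) a T (projc z1) /\
  forall i, z1 i = if i \in T then moved (z i) (proj (z1 i)) else z i.
Proof.
move=> st; have [i0 [i0T d0 frame]] := st.
have [dd0 e0] := deltaF_liftopE (o := Send a) d0.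
split.
  exists i0; rewrite !ffunE; split=> // j ji; rewrite !ffunE.
  have [recv stay] := frame j ji; split; last by move/stay ->.
  by move/recv/(deltaF_liftopE (o := Recv a)) => [].
move=> j; case: ifPn => jT; last exact: step_frame st jT.
have [->|ji] := eqVneq j i0; first exact: e0.
exact: (deltaF_liftopE (o := Recv a) ((frame j ji).1 jT)).2.
Qed.

Lemma step_nsend_inv z T z1 : step dF z None T z1 ->
  exists i0, dF (z i0) (Send None) (z1 i0) /\ forall j, j != i0 -> z1 j = z j.
Proof.
move=> [i0 [_ d0 frame]]; exists i0; split=> // j ji; have [recv stay] := frame j ji.
by case: (boolP (j \in T)) => [/recv /deltaF_nrecv|/stay].
Qed.

Lemma projc_nsend z T z1 : step dF z None T z1 -> projc z1 = projc z.
Proof.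
move/step_nsend_inv => [i0 [d0 frame]]; apply/ffunP => j; rewrite !ffunE.
have [->|ji] := eqVneq j i0; last by rewrite frame.
by case: (deltaF_nsendE d0) => [[q _ [-> ->]]|[q [-> ->]]].
Qed.

Fixpoint projrun t : seq (D * {set 'I_k} * cfg) :=
  match t with
  | [::] => [::]
  | (Some a, T, z) :: t' => (a, T, projc z) :: projrun t'
  | (None, _, _) :: t' => projrun t'
  end.

Lemma run_projrun z t : run dF z t ->
  run delta (projc z) (projrun t) /\ endcfg (projc z) (projrun t) = projc (endcfg z t).
Proof.
elim: t z => [|[[[a|] T] z1] t IH] z //=.
  by move=> [/step_liftop_inv [st _] /IH [r e]]; split.
by move=> [/projc_nsend pz /IH]; rewrite pz.
Qed.

Lemma reach_projc z z' : reach dF z z' -> reach delta (projc z) (projc z').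
Proof. by move=> [t [/run_projrun [r e] <-]]; exists (projrun t). Qed.

Lemma projrun_plain_nonnil c t :
  run dF (cfg_plain c) t -> t <> [::] -> projrun t <> [::].
Proof.
case: t => [|[[[a|] T] z1] t] //= [/step_nsend_inv [i0 [d0 _]] _] _.
by move: d0; rewrite ffunE => /deltaF_nsendE [[q _ []]|[q []]].
Qed.

Lemma touched_cons e s i : touched (e :: s) i <-> i \in e.1.2 \/ touched s i.
Proof.
split=> [[e' [[<-|e's] ie']]|[ie|[e' [e's ie']]]]; [by left|by right; exists e'| |];
  by [exists e; split=> //; left | exists e'; split=> //; right].
Qed.

Lemma visits_cons e s i : visits F (e :: s) i <-> e.2 i \in F \/ visits F s i.
Proof.
split=> [[e' [[<-|e's] ie']]|[ie|[e' [e's ie']]]]; [by left|by right; exists e'| |];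
  by [exists e; split=> //; left | exists e'; split=> //; right].
Qed.

(* What client [i] in instrumented state [w] still owes along the projected
   run [s] before it may be back in a plain state: a plain client that gets
   touched must visit [F]; a hatted one must be in [F] now or visit it. *)
Definition pending s i w : Prop :=
  match w with
  | Plain _ => touched s i -> visits F s i
  | Hat q => q \in F \/ visits F s i
  | Tilde _ => True
  end.

Lemma pending_cons_touched e s i w :
  i \in e.1.2 -> pending s i (moved w (e.2 i)) -> pending (e :: s) i w.
Proof.
move=> ie; case: w => q //= pend; rewrite visits_cons; [move=> _|right];
  by case: pend; [left|right].
Qed.

Lemma pending_cons_untouched e s i w :
  i \notin e.1.2 -> pending s i w -> pending (e :: s) i w.
Proof.
move=> ie; case: w => q //= pend; rewrite ?touched_cons visits_cons.
  by case=> [ie'|/pend]; [rewrite ie' in ie | right].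
by case: pend; [left|right; right].
Qed.

Lemma pending_of_run z t i :
  run dF z t -> isPlain (endcfg z t i) -> pending (projrun t) i (z i).
Proof.
elim: t z => [|[[[a|] T] z1] t IH] z /=.
- by rewrite /endcfg /=; case: (z i) => //= q _ _ [? []].
- move=> [/step_liftop_inv [_ z1E] r] /(IH _ r); rewrite z1E.
  case: ifPn => iT; last exact: pending_cons_untouched.
  by move=> pend; apply: (@pending_cons_touched (a, T, projc z1)) => //; rewrite ffunE.
- move=> [/step_nsend_inv [i0 [d0 frame]] r] /(IH _ r).
  have [->|ii0] := eqVneq i i0; last by rewrite frame.
  by case: (deltaF_nsendE d0) => [[q qF [-> _]]|[q [-> _]]] //= _; left.
Qed.

Definition advance z (T : {set 'I_k}) y1 : cfgF :=
  [ffun j => if j \in T then moved (z j) (y1 j) else z j].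

Lemma step_advance z a T y1 :
  step delta (projc z) a T y1 -> step dF z (Some a) T (advance z T y1).
Proof.
move=> [i [iT di frame]]; exists i; rewrite ffunE iT; split=> //.
  by apply: (deltaF_moved (o := Send a)); rewrite ffunE in di.
move=> j ji; rewrite ffunE; have [recv stay] := frame j ji; split; last by move/negbTE ->.
by move=> jT; rewrite jT; apply: (deltaF_moved (o := Recv a)); have := recv jT; rewrite ffunE.
Qed.

Lemma projc_advance z a T y1 : step delta (projc z) a T y1 -> projc (advance z T y1) = y1.
Proof.
move=> st; apply/ffunP => j; rewrite !ffunE; case: ifPn => [_|jT]; first by case: (z j).
by rewrite (step_frame st jT) ffunE.
Qed.

Lemma reach_settle z : reach dF z [ffun i => settle (z i)].
Proof.
apply: reach_solo_sends => i; case: (z i) => q /=; try by left.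
by case: ifP => qF; [right; apply: dF_hat_n | left].
Qed.

Lemma reach_release z : reach dF z [ffun i => release (z i)].
Proof.
by apply: reach_solo_sends => i; case: (z i) => q /=; [left|left|right; apply: dF_tilde_n].
Qed.

Lemma reach_tilde_plain c : reach dF (cfg_tilde c) (cfg_plain c).
Proof.
suff <- : [ffun i => release (cfg_tilde c i)] = cfg_plain c by apply: reach_release.
by apply/ffunP => i; rewrite !ffunE.
Qed.

Lemma reach_tilde c c' : reach delta c c' -> reach dF (cfg_tilde c) (cfg_tilde c').
Proof.
move=> [s [r <-]]; elim: s c r => [|[[a T] y] s IH] c /=; first by move=> _; apply: reach_refl.
move=> [st /IH]; apply: reach_trans; exists [:: (Some a, T, cfg_tilde y)]; split=> //=; split=> //.
suff <- : advance (cfg_tilde c) T y = cfg_tilde y by apply: step_advance; rewrite projc_tilde.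
apply/ffunP => j; rewrite !ffunE; case: ifPn => // jT.
by rewrite (step_frame st jT).
Qed.

(* [z] replays the run [s] of [y] back to the plain configuration.  The last
   clause covers clients that visit [F] before they are first touched: they sit
   in their final state, so the final configuration settles them. *)
Definition simulates y s z : Prop :=
  forall i, [/\ proj (z i) = y i, pending s i (z i) & isPlain (z i) -> y i = endcfg y s i].

Lemma pending_advance y a T y1 s i w :
  step delta y a T y1 -> proj w = y i -> (isPlain w -> y i = endcfg y1 s i) ->
  pending ((a, T, y1) :: s) i w ->
  pending s i (if i \in T then moved (settle w) (y1 i) else settle w).
Proof.
move=> st; case: ifPn => iT.
  case: w => q //= _ _.
  - by move=> pend; apply/(visits_cons (a, T, y1))/pend/touched_cons; left.
  - by case: ifP => //= qF [//|/visits_cons].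
have y1i : y1 i = y i := step_frame st iT.
case: w => q //= wq.
- move=> final pend touch.
  have /visits_cons [|//] := pend ((touched_cons _ _ _).2 (or_intror touch)).
  rewrite /= y1i final // => endF.
  exact: (visits_endcfg (touched_nonnil touch) endF).
- move=> _; case: ifP => //= qF [//|/visits_cons [|]]; last by right.
  by rewrite /= y1i -wq qF.
Qed.

Lemma simulates_step y a T y1 s z :
  step delta y a T y1 -> simulates y ((a, T, y1) :: s) z ->
  exists z1, reach_plus dF z z1 /\ simulates y1 s z1.
Proof.
move=> st sim; set zs := [ffun i => settle (z i)].
have stz : step delta (projc zs) a T y1.
  suff -> : projc zs = y by [].
  apply/ffunP => i; rewrite !ffunE; have [<- _ _] := sim i.
  by case: (z i) => //= q; case: ifP.
exists (advance zs T y1); split.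
  exact: reach_step_plus (reach_settle z) (step_advance stz).
move=> i; have [pz pend plain] := sim i; split.
- by have := congr1 (fun f : cfg => f i) (projc_advance stz); rewrite ffunE.
- by rewrite ffunE [zs i]ffunE; apply: pending_advance st pz plain pend.
- rewrite ffunE [zs i]ffunE; case: ifPn => iT; first by case: (settle _).
  rewrite (step_frame st iT) => pl; apply: plain; move: pl.
  by case: (z i) => //= q; case: ifP.
Qed.

Lemma reach_plain_of_simulates y s z :
  run delta y s -> simulates y s z -> reach dF z (cfg_plain (endcfg y s)).
Proof.
elim: s y z => [|[[a T] y1] s IH] y z /=.
  move=> _ sim; apply: reach_trans (reach_settle z) _.
  suff <- : [ffun i => release ([ffun j => settle (z j)] i)] = cfg_plain y.
    exact: reach_release.
  apply/ffunP => i; rewrite !ffunE; have [<- pend _] := sim i.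
  by move: pend; case: (z i) => //= q [qF|[? [[] _]]]; rewrite qF.
move=> [st r] sim; have [z1 [zz1 sim1]] := simulates_step st sim.
exact: reach_trans (reach_plus_reach zz1) (IH _ _ r sim1).
Qed.

Lemma reach_plus_plain_of_simulates y s z : s <> [::] ->
  run delta y s -> simulates y s z -> reach_plus dF z (cfg_plain (endcfg y s)).
Proof.
case: s => [//|[[a T] y1] s] _ [st r] sim.
have [z1 [zz1 sim1]] := simulates_step st sim.
exact: reach_plus_trans zz1 (reach_plain_of_simulates r sim1).
Qed.

Lemma simulates_plain c s :
  s <> [::] -> endcfg c s = c ->
  (forall i, touched s i -> c i \in F \/ visits F s i) ->
  simulates c s (cfg_plain c).
Proof.
move=> ne e good i; rewrite ffunE; split=> //= [touch|]; last by rewrite e.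
by case: (good i touch) => [cF|//]; apply: (visits_endcfg (x := c) ne); rewrite e.
Qed.

End Instrumented.

Theorem lemma7 (Q D : finType) (delta : Q -> Op D -> Q -> Prop) (F : {pred Q})
  (k : nat) (c0 c : {ffun 'I_k -> Q}) :
  (reach delta c0 c /\ good_reach delta (fun q => q \in F) c c)
  <->
  (reach (deltaF delta F) (cfg_tilde c0) (cfg_plain c) /\
   reach_plus (deltaF delta F) (cfg_plain c) (cfg_plain c)).
Proof.
split.
  move=> [c0c [s [ne r e good]]]; split.
    exact: reach_trans (reach_tilde F c0c) (reach_tilde_plain delta F c).
  rewrite -{2}e; apply: (reach_plus_plain_of_simulates ne r).
  by apply: (simulates_plain ne e) => i [x [xs xi]]; apply: good xs i xi.
move=> [c0c [t [ne [r e]]]]; split.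
  by rewrite -(projc_tilde c0) -(projc_plain c); apply: reach_projc c0c.
have [pr pe] := run_projrun r; rewrite projc_plain in pr pe.
exists (projrun t); split=> //.
- exact: projrun_plain_nonnil r ne.
- by rewrite pe e projc_plain.
move=> x xs i xi; right.
have := pending_of_run (i := i) r; rewrite e !ffunE; apply=> //; by exists x.
Qed.
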